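(* Let $n\ge0$ and, for $0\le k\le n$, let $\mathbf b^{(k)}\in\mathbb R^{n+1}$ be given by $\mathbf b^{(k)}_i=\binom{k}{i}$. Define $$\mathbf v^{\pm}_{(k)}=2^{\frac{n-k}{2}}\,\mathbf b^{(k)}\pm2^{\frac k2}\,\mathbf b^{(n-k)}.$$ Then $K^{(n)}\mathbf v^{\pm}_{(k)}=\pm2^{n/2}\,\mathbf v^{\pm}_{(k)}$ for every $k$. Moreover, the vectors $\mathbf v^{+}_{(k)}$ for $0\le k\le n/2$ together with $\mathbf v^{-}_{(k)}$ for $0\le k<n/2$ form a basis of $\mathbb R^{n+1}$; hence $K^{(n)}$ is diagonalizable with eigenvalue $2^{n/2}$ of multiplicity $\lfloor n/2\rfloor+1$ and eigenvalue $-2^{n/2}$ of multiplicity $\lceil n/2\rceil$.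
   Context: For an integer $n\ge 0$, the $n$-th Krawtchouk matrix $K^{(n)}$ is the $(n+1)\times(n+1)$ integer matrix with rows and columns indexed by $0,1,\dots,n$, whose entries are defined by $(1+t)^{n-q}(1-t)^q=\sum_{p=0}^n K^{(n)}_{pq}\,t^p$. *)

(* Real numbers are modelled by an arbitrary real closed field R
   (which contains sqrt 2); 2^(x/2) is written (Num.sqrt 2)^+x. *)
From HB Require Import structures.
From mathcomp Require Import all_boot all_order all_algebra.
Set Implicit Arguments. Unset Strict Implicit. Unset Printing Implicit Defensive.
Import Order.TTheory GRing.Theory Num.Theory.
Local Open Scope ring_scope.

Definition kraw (R : comNzRingType) (n : nat) : 'M[R]_(n.+1) :=
  \matrix_(p < n.+1, q < n.+1)
    (((1 + 'X) ^+ (n - q) * (1 - 'X) ^+ q : {poly R})`_p).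

Definition bvec (R : comNzRingType) (n k : nat) : 'cV[R]_(n.+1) :=
  \col_(i < n.+1) ('C(k, i))%:R.

Definition vplus (R : rcfType) (n k : nat) : 'cV[R]_(n.+1) :=
  (Num.sqrt (2 : R)) ^+ (n - k) *: bvec R n k + (Num.sqrt (2 : R)) ^+ k *: bvec R n (n - k).
Definition vminus (R : rcfType) (n k : nat) : 'cV[R]_(n.+1) :=
  (Num.sqrt (2 : R)) ^+ (n - k) *: bvec R n k - (Num.sqrt (2 : R)) ^+ k *: bvec R n (n - k).

(* Column q of K^(n) lists the coefficients of (1+t)^(n-q) (1-t)^q, so K^(n) b^(k)
   lists those of  sum_j C(k,j) (1+t)^(n-j) (1-t)^j = ((1+t) + (1-t))^k (1+t)^(n-k),
   i.e. K^(n) b^(k) = 2^k b^(n-k); with 2^k = 2^(k/2) 2^(k/2) the eigenvector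
   relations for v^+ and v^- follow. Sums and differences of v^+_(k) and v^-_(k)
   recover every b^(j), and the b^(j) are the rows of the unitriangular Pascal
   matrix, so the listed v^+, v^- form a basis W. Then W^-1 K^(n) W is diagonal,
   which gives diagonalizability and the characteristic polynomial; each
   eigenspace has dimension at least the number of basis vectors it contains, and
   the two eigenspaces meet trivially, so these bounds are attained. *)

From HB Require Import structures.
From mathcomp Require Import all_boot all_order all_algebra.
From mathcomp Require Import zify.
Import Order.TTheory GRing.Theory Num.Theory.
Local Open Scope ring_scope.

Section MatrixOfColumns.
Context {F : fieldType} {m : nat}.
Implicit Types (X : seq 'cV[F]_m).

Definition mx_of_cols X : 'M[F]_m := (\matrix_(j < m) (X`_j)^T)^T.

Lemma mulmx_mx_of_cols X (c : 'cV[F]_m) :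
  mx_of_cols X *m c = \sum_(j < m) c j 0 *: X`_j.
Proof.
apply/matrixP => i k; rewrite (ord1 k) !mxE summxE.
by apply: eq_bigr => j _; rewrite !mxE mulrC.
Qed.

Lemma tr_sub_mx_of_cols {X x} : size X = m -> x \in X ->
  (x^T <= (mx_of_cols X)^T)%MS.
Proof.
move=> sizeX /(nthP 0) [j]; rewrite sizeX => lt_j_m <-.
by rewrite -[(X`_j)^T](rowK (fun j : 'I_m => (X`_j)^T) (Ordinal lt_j_m)) trmxK row_sub.
Qed.

Lemma basis_of_mx_of_cols {X} : size X = m -> mx_of_cols X \in unitmx ->
  basis_of fullv X.
Proof.
move=> sizeX W_unit; rewrite basisEdim sizeX dimvf /dim /= muln1 leqnn andbT.
apply/subvP => v _; rewrite -[v](mulKVmx W_unit) mulmx_mx_of_cols.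
by apply: memv_suml => j _; apply/memvZ/memv_span/mem_nth; rewrite sizeX.
Qed.

Lemma mulmx_mx_of_cols_eigen {X} {d : 'rV[F]_m} {K : 'M[F]_m} :
  (forall j : 'I_m, K *m X`_j = d 0 j *: X`_j) ->
  K *m mx_of_cols X = mx_of_cols X *m diag_mx d.
Proof.
move=> eigX; apply/matrixP => i j; rewrite mul_mx_diag.
have := congr1 (fun v : 'cV_m => v i 0) (eigX j); rewrite !mxE mulrC => <-.
by apply: eq_bigr => l _; rewrite !mxE.
Qed.

End MatrixOfColumns.

Lemma char_poly_similar {F : fieldType} {m : nat} {K D W : 'M[F]_m} :
  W \in unitmx -> K *m W = W *m D -> char_poly K = char_poly D.
Proof.
move=> W_unit KW; pose Wp := map_mx polyC W.
have charW : char_poly_mx K *m Wp = Wp *m char_poly_mx D.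
  by rewrite /char_poly_mx mulmxBl mulmxBr scalar_mxC -!map_mxM KW.
apply: (@mulIf _ (\det Wp)).
  by rewrite /Wp det_map_mx polyC_eq0 -unitfE -unitmxE.
by rewrite /char_poly -det_mulmx charW det_mulmx mulrC.
Qed.

Lemma mxrank_eigenspaces_le {F : fieldType} {m : nat} (K : 'M[F]_m) {a b : F} :
  a != b -> (\rank (eigenspace K a) + \rank (eigenspace K b) <= m)%N.
Proof.
move=> a_neq_b; rewrite -[X in (_ <= X)%N]addn0.
set C := (eigenspace K a :&: eigenspace K b)%MS.
have /eigenspaceP CKa : (C <= eigenspace K a)%MS by apply: capmxSl.
have /eigenspaceP CKb : (C <= eigenspace K b)%MS by apply: capmxSr.
have C0 : C = 0.
  have : (a - b) *: C = 0 by rewrite scalerBl -CKa CKb subrr.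
  by move/eqP; rewrite scalemx_eq0 subr_eq0 (negbTE a_neq_b) => /eqP.
rewrite -(mxrank0 F m m) -C0 -mxrank_sum_cap.
by rewrite -[m in (_ <= m + _)%N](mxrank1 F m) leq_add2r mxrankS ?submx1.
Qed.

Definition step_row {F : fieldType} {m : nat} (p : nat) (a b : F) : 'rV[F]_m :=
  \row_(j < m) (if (j < p)%N then a else b).

Section StepDiagonal.
Context {F : fieldType} {m p : nat} {a b : F} {K W : 'M[F]_m}.
Hypotheses (p_le_m : (p <= m)%N) (W_unit : W \in unitmx).
Hypothesis KW : K *m W = W *m diag_mx (step_row p a b).

Let P := invmx W.

Let PK : P *m K = diag_mx (step_row p a b) *m P.
Proof.
rewrite -[LHS]mulmx1 -(mulmxV W_unit) -/P mulmxA -(mulmxA P) KW.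
by rewrite !mulmxA mulVmx ?mul1mx.
Qed.

Lemma diagonalizable_step : diagonalizable K.
Proof.
exists P; first by rewrite unitmx_inv.
by apply/similar_diagPex; exists (step_row p a b); apply/similarP; rewrite ?unitmx_inv.
Qed.

Lemma char_poly_step :
  char_poly K = ('X - a%:P) ^+ p * ('X - b%:P) ^+ (m - p).
Proof.
rewrite (char_poly_similar W_unit KW) char_poly_trig ?diag_mx_is_trig //.
under eq_bigr => i _ do rewrite mxE eqxx mulr1n mxE.
rewrite -(big_mkord xpredT (fun i => 'X - (if (i < p)%N then a else b)%:P)).
rewrite (big_cat_nat (n := p)) //=.
rewrite (eq_big_nat _ _ (F2 := fun=> 'X - a%:P)) => [|i /andP [_ ->] //].
rewrite [X in _ * X](eq_big_nat _ _ (F2 := fun=> 'X - b%:P)) => [|i /andP [pi _]].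
  by rewrite !prodr_const_nat subn0.
by rewrite ltnNge pi.
Qed.

Let pid_mx_step : (pid_mx p : 'M[F]_m) *m diag_mx (step_row p a b) = a *: pid_mx p.
Proof.
apply/matrixP => i j; rewrite mul_mx_diag !mxE.
by case: eqP => [-> | _]; case: ltnP; rewrite /= ?mulr1 ?mul1r ?mulr0 ?mul0r.
Qed.

Let copid_mx_step : (copid_mx p : 'M[F]_m) *m diag_mx (step_row p a b) = b *: copid_mx p.
Proof.
apply/matrixP => i j; rewrite mul_mx_diag !mxE.
case: (eqVneq i j) => [-> | ij]; last first.
  by have /negbTE -> : (i : nat) != j by []; rewrite subrr mul0r mulr0.
by rewrite eqxx; case: ltnP; rewrite /= ?subrr ?subr0 ?mulr1 ?mul1r ?mulr0 ?mul0r.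
Qed.

Let P_free : row_free P. Proof. by rewrite row_free_unit unitmx_inv. Qed.

(* [eigenspace] consists of left eigenvectors: here the rows of [W^-1]. *)
Let rank_eigenspace_l_ge : (p <= \rank (eigenspace K a))%N.
Proof.
rewrite -[p in (p <= _)%N](@rank_pid_mx F m m p) // -(mxrankMfree _ P_free).
by apply/mxrankS/eigenspaceP; rewrite -mulmxA PK mulmxA pid_mx_step scalemxAl.
Qed.

Let rank_eigenspace_r_ge : (m - p <= \rank (eigenspace K b))%N.
Proof.
rewrite -(rank_copid_mx F p_le_m) -(mxrankMfree _ P_free).
by apply/mxrankS/eigenspaceP; rewrite -mulmxA PK mulmxA copid_mx_step scalemxAl.
Qed.

Hypothesis a_neq_b : a != b.

Lemma rank_eigenspace_step_l : \rank (eigenspace K a) = p.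
Proof. have := mxrank_eigenspaces_le K a_neq_b; lia. Qed.

Lemma rank_eigenspace_step_r : \rank (eigenspace K b) = (m - p)%N.
Proof. have := mxrank_eigenspaces_le K a_neq_b; lia. Qed.

End StepDiagonal.

Lemma coef_1DX_exp {R : comNzRingType} (k i : nat) :
  ((1 + 'X : {poly R}) ^+ k)`_i = ('C(k, i))%:R.
Proof.
elim: k i => [|k IHk] i; first by rewrite expr0 coef1 bin0n; case: i.
rewrite exprSr mulrDr mulr1 coefD coefMX !IHk.
by case: i => [|i] /=; rewrite ?bin0 ?addr0 // binS natrD.
Qed.

Lemma sum_binomial_shift {R : comNzRingType} (x y : R) {n k : nat} :
  (k <= n)%N ->
  \sum_(j < n.+1) x ^+ (n - j) * y ^+ j *+ 'C(k, j) = (x + y) ^+ k * x ^+ (n - k).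
Proof.
move=> le_k_n; rewrite exprDn mulr_suml.
rewrite (big_ord_widen n.+1
  (fun j => x ^+ (k - j) * y ^+ j *+ 'C(k, j) * x ^+ (n - k))) //.
rewrite [RHS]big_mkcond; apply: eq_bigr => j _; case: ifP => [lt_j_k | /negbT].
  by rewrite mulrnAl mulrAC -exprD; congr (_ * _ *+ _); congr (_ ^+ _); lia.
by rewrite -leqNgt => /bin_small ->; rewrite mulr0n.
Qed.

Lemma kraw_bvec {R : comNzRingType} (n k : nat) : (k <= n)%N ->
  kraw R n *m bvec R n k = 2 ^+ k *: bvec R n (n - k).
Proof.
move=> le_k_n; apply/matrixP => i l; rewrite !mxE.
have := congr1 (fun q : {poly R} => q`_i) (sum_binomial_shift (1 + 'X) (1 - 'X) le_k_n).
rewrite /= coef_sum addrACA subrr addr0 -polyC1 -polyCD -rmorphXn coefCM coef_1DX_exp.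
by move=> <-; apply: eq_bigr => j _; rewrite !mxE coefMn mulr_natr.
Qed.

Definition pascal_mx {R : comNzRingType} (n : nat) : 'M[R]_n :=
  \matrix_(i < n, j < n) ('C(i, j))%:R.

Lemma pascal_mx_unit {R : comUnitRingType} (n : nat) : @pascal_mx R n \in unitmx.
Proof.
rewrite unitmxE det_trig; last by apply/is_trig_mxP => i j lt_ij; rewrite mxE bin_small.
by rewrite big1 ?unitr1 // => i _; rewrite mxE binn.
Qed.

Lemma row_pascal_mx {R : comNzRingType} (n : nat) (j : 'I_n.+1) :
  row j (pascal_mx n.+1) = (bvec R n j)^T.
Proof. by apply/rowP => i; rewrite !mxE. Qed.

Section KrawtchoukEigenvectors.
Variables (R : rcfType) (n : nat).
Local Notation s := (Num.sqrt (2 : R)).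

Lemma two_exp_sqrt (k : nat) : (2 : R) ^+ k = s ^+ k.*2.
Proof. by rewrite -mul2n exprM sqr_sqrtr ?ler0n. Qed.

Lemma kraw_vplus (k : nat) : (k <= n)%N ->
  kraw R n *m vplus R n k = s ^+ n *: vplus R n k.
Proof.
move=> le_k_n; rewrite /vplus mulmxDr -!scalemxAr !kraw_bvec ?leq_subr // subKn //.
rewrite !scalerA scalerDr !scalerA addrC !two_exp_sqrt -!exprD.
by congr (_ *: _ + _ *: _); congr (_ ^+ _); lia.
Qed.

Lemma kraw_vminus (k : nat) : (k <= n)%N ->
  kraw R n *m vminus R n k = - s ^+ n *: vminus R n k.
Proof.
move=> le_k_n; rewrite /vminus mulmxBr -!scalemxAr !kraw_bvec ?leq_subr // subKn //.
rewrite !scalerA scalerBr !scalerA !two_exp_sqrt !mulNr !scaleNr -!exprD opprK addrC.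
by congr (- (_ *: _) + _ *: _); congr (_ ^+ _); lia.
Qed.

Lemma vplusD_vminus (k : nat) :
  vplus R n k + vminus R n k = (s ^+ (n - k) *+ 2) *: bvec R n k.
Proof. by rewrite /vplus /vminus addrACA subrr addr0 -scalerMnl mulr2n. Qed.

Lemma vplusB_vminus (k : nat) :
  vplus R n k - vminus R n k = (s ^+ k *+ 2) *: bvec R n (n - k).
Proof. by rewrite /vplus /vminus opprB addrC addrA subrK -scalerMnl mulr2n. Qed.

Lemma vminus_half (k : nat) : k.*2 = n -> vminus R n k = 0.
Proof. by move=> n_eq; rewrite /vminus (_ : (n - k = k)%N) ?subrr //; lia. Qed.

Lemma bvec_tr_sub (r : nat) (M : 'M[R]_(r, n.+1)) :
  (forall k, (k.*2 <= n)%N -> ((vplus R n k)^T <= M)%MS) ->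
  (forall k, (k.*2 < n)%N -> ((vminus R n k)^T <= M)%MS) ->
  forall j, (j <= n)%N -> ((bvec R n j)^T <= M)%MS.
Proof.
move=> vplusM vminusM j le_j_n.
have unscale (c : R) (v : 'cV[R]_n.+1) : c != 0 -> ((c *: v)^T <= M)%MS -> (v^T <= M)%MS.
  move=> c_neq0; rewrite linearZ /= => /(scalemx_sub c^-1).
  by rewrite scalerA mulVf // scale1r.
have c_neq0 (k : nat) : s ^+ k *+ 2 != 0.
  by apply: lt0r_neq0; rewrite pmulrn_lgt0 // exprn_gt0 // sqrtr_gt0 ltr0n.
case: (ltngtP j.*2 n) => [lt_2j_n | lt_n_2j | eq_2j_n].
- apply: (unscale _ _ (c_neq0 (n - j)%N)); rewrite -vplusD_vminus linearD /=.
  by rewrite addmx_sub ?vplusM ?vminusM // ltnW.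
- have lt_2k_n : ((n - j).*2 < n)%N by lia.
  rewrite -(subKn le_j_n); apply: (unscale _ _ (c_neq0 (n - j)%N)).
  rewrite -vplusB_vminus linearB /= addmx_sub ?vplusM ?(ltnW lt_2k_n) //.
  by rewrite -scaleN1r scalemx_sub ?vminusM.
- apply: (unscale _ _ (c_neq0 (n - j)%N)).
  by rewrite -vplusD_vminus vminus_half // addr0 vplusM // eq_2j_n.
Qed.

Definition kraw_eigvecs : seq 'cV[R]_(n.+1) :=
  [seq vplus R n k | k <- iota 0 (n./2).+1] ++
  [seq vminus R n k | k <- iota 0 (uphalf n)].

Local Notation X := kraw_eigvecs.

Lemma size_kraw_eigvecs : size X = n.+1.
Proof. by rewrite size_cat !size_map !size_iota uphalfE -!divn2; lia. Qed.

Lemma vplus_in_eigvecs (k : nat) : (k.*2 <= n)%N -> vplus R n k \in X.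
Proof.
by move=> le_2k_n; rewrite mem_cat map_f // mem_iota -divn2; lia.
Qed.

Lemma vminus_in_eigvecs (k : nat) : (k.*2 < n)%N -> vminus R n k \in X.
Proof.
by move=> lt_2k_n; rewrite mem_cat orbC map_f // mem_iota uphalfE -divn2; lia.
Qed.

Lemma kraw_eigvecs_unit : mx_of_cols X \in unitmx.
Proof.
rewrite -unitmx_tr -row_full_unit -sub1mx.
have pascal_full : (1%:M <= @pascal_mx R n.+1)%MS.
  by rewrite sub1mx row_full_unit pascal_mx_unit.
apply: submx_trans pascal_full _; apply/row_subP => j; rewrite row_pascal_mx.
apply: bvec_tr_sub => [k le_2k_n | k lt_2k_n | ]; last by rewrite -ltnS.
- exact/tr_sub_mx_of_cols/vplus_in_eigvecs/le_2k_n/size_kraw_eigvecs.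
- exact/tr_sub_mx_of_cols/vminus_in_eigvecs/lt_2k_n/size_kraw_eigvecs.
Qed.

Lemma kraw_eigvecs_eigen (j : 'I_n.+1) :
  kraw R n *m X`_j = step_row (n./2).+1 (s ^+ n) (- s ^+ n) 0 j *: X`_j.
Proof.
have lt_j_n := ltn_ord j.
rewrite mxE nth_cat size_map size_iota; case: ltnP => [lt_j_p | le_p_j].
  by rewrite (nth_map 0%N) ?size_iota // nth_iota // kraw_vplus //; lia.
have lt_jp_q : (j - (n./2).+1 < uphalf n)%N by rewrite uphalfE -divn2; lia.
by rewrite (nth_map 0%N) ?size_iota // nth_iota // kraw_vminus //; lia.
Qed.

End KrawtchoukEigenvectors.

Theorem mainTheorem13 (R : rcfType) (n : nat) :
  let a : R := (Num.sqrt (2 : R)) ^+ n in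
  (forall k : nat, (k <= n)%N ->
     kraw R n *m vplus R n k = a *: vplus R n k /\
     kraw R n *m vminus R n k = - a *: vminus R n k) /\
  basis_of fullv
    ([seq vplus R n k | k <- iota 0 (n./2).+1] ++
     [seq vminus R n k | k <- iota 0 (uphalf n)]) /\
  diagonalizable (kraw R n) /\
  char_poly (kraw R n) = ('X - a%:P) ^+ (n./2).+1 * ('X + a%:P) ^+ (uphalf n) /\
  \rank (eigenspace (kraw R n) a) = (n./2).+1 /\
  \rank (eigenspace (kraw R n) (- a)) = uphalf n.
Proof.
move=> a.
have p_le_m : ((n./2).+1 <= n.+1)%N by rewrite -divn2; lia.
have m_sub_p : (n.+1 - (n./2).+1)%N = uphalf n by rewrite uphalfE -divn2; lia.
have a_neq_Na : a != - a.
  by rewrite -addr_eq0 lt0r_neq0 // addr_gt0 // exprn_gt0 // sqrtr_gt0 ltr0n.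
have W_unit := kraw_eigvecs_unit R n.
have KW := mulmx_mx_of_cols_eigen (kraw_eigvecs_eigen R n).
split; first by move=> k le_k_n; split; [exact: kraw_vplus | exact: kraw_vminus].
split; first exact: basis_of_mx_of_cols (size_kraw_eigvecs R n) W_unit.
split; first exact: diagonalizable_step W_unit KW.
rewrite -m_sub_p (char_poly_step p_le_m W_unit KW) polyCN opprK.
by rewrite (rank_eigenspace_step_l p_le_m W_unit KW a_neq_Na)
  (rank_eigenspace_step_r p_le_m W_unit KW a_neq_Na).
Qed.
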